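(* Let $\mathbb{F}$ be a field with more than $(l+2)/2$ elements, and let $\Phi: M_n(\mathbb{F}) \to M_l(\mathbb{F})$ be a linear map. Then $\Phi(X)\Phi(Y) = 0$ for all $X,Y \in M_n(\mathbb{F})$ if and only if there exist nonnegative integers $p,q,u,v$ with $2p+q = l$, $u\le p$, $v\le q$, and an invertible $S_0 \in M_l(\mathbb{F})$ (all independent of $A$) such that for every $A \in M_n(\mathbb{F})$, $$S_0^{-1}\Phi(A)S_0 = \begin{pmatrix} 0_p & Z_{12} & Z_{13}\\ 0_p & 0_p & 0\\ 0 & Z_{32} & 0_q\end{pmatrix},\quad Z_{13} = \begin{pmatrix} \hat Z_{13} & 0_{u,q-v}\\ 0_{p-u,v} & 0_{p-u,q-v}\end{pmatrix},\quad Z_{32} = \begin{pmatrix} 0_{v,u} & 0_{v,p-u}\\ 0_{q-v,u} & \hat Z_{32}\end{pmatrix},$$ where $Z_{12}\in M_p(\mathbb{F})$, $\hat Z_{13}$ is $u\times v$ and $\hat Z_{32}$ is $(q-v)\times(p-u)$ (all depending on $A$), the block rows/columns having sizes $p,p,q$.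
   Context: $0_{a,b}$ denotes the $a\times b$ zero matrix and $0_p$ the $p\times p$ zero matrix. *)

From HB Require Import structures.
From mathcomp Require Import all_boot all_order all_algebra.
Set Implicit Arguments. Unset Strict Implicit. Unset Printing Implicit Defensive.
Import Order.TTheory GRing.Theory Num.Theory.
Local Open Scope ring_scope.

(* [thm38_form p q u v M] : the l x l matrix M (with l = 2p+q), split into
   block rows/columns of sizes p, p, q (indices [0,p), [p,2p), [2p,2p+q)), has
   the shape
        ( 0_p  Z12  Z13 )
        ( 0_p  0_p  0   )
        ( 0    Z32  0_q )
   with Z13 = ( hatZ13  0 ; 0  0 )  (hatZ13 of size u x v, top-left of block (1,3))
   and  Z32 = ( 0  0 ; 0  hatZ32 )  (hatZ32 of size (q-v) x (p-u), bottom-right of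
   block (3,2)).  Written entrywise: an entry may be nonzero only inside Z12,
   inside hatZ13, or inside hatZ32. *)
Definition thm38_form (F : fieldType) (l p q u v : nat) (M : 'M[F]_l) : Prop :=
  forall i j : 'I_l, M i j != 0 ->
    [|| ((i < p)%N && (p <= j < p + p)%N),
        ((i < u)%N && (p + p <= j < p + p + v)%N)
      | ((p + p + v <= i)%N && (p + u <= j < p + p)%N)].

From HB Require Import structures.
From mathcomp Require Import all_boot all_order all_algebra.
From mathcomp Require Import zify fingroup perm.
Set Implicit Arguments. Unset Strict Implicit. Unset Printing Implicit Defensive.
Import GRing.Theory.
Local Open Scope ring_scope.

(* Let U be the row space spanned by the matrices Phi(A) and W the one spanned
   by their transposes.  The hypothesis Phi(X) Phi(Y) = 0 says that U lies in
   the left kernel of every Phi(A) while the rows of Phi(A) lie in U, so in a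
   basis starting with a basis of U every Phi(A) is supported in the block with
   rows >= dim U and columns < dim U.  It also makes W orthogonal to U, whence
   dim U + dim W <= l and one of them is at most l/2.  If p = dim W <= l/2, the
   transposed argument puts every Phi(A) in the first p rows and the last l - p
   columns: this is the required form with u = p, v = q.  If r = dim U <= l/2,
   shifting the basis cyclically by r moves the block to columns [r, 2r) and
   rows outside [r, 2r): the required form with u = v = 0. *)

Section BlockSupport.

Variables (F : fieldType) (l : nat).
Implicit Types (M N : 'M[F]_l) (p q r u v : nat).

Definition lower_left_block r M :=
  forall i j : 'I_l, M i j != 0 -> (r <= i)%N && (j < r)%N.

Lemma thm38_form_mul0 p q u v M N : (u <= p)%N ->
  thm38_form p q u v M -> thm38_form p q u v N -> M *m N = 0.
Proof.
move=> le_up formM formN; apply/matrixP => i j; rewrite !mxE big1 // => k _.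
have [-> | nzM] := eqVneq (M i k) 0; first by rewrite mul0r.
have [-> | nzN] := eqVneq (N k j) 0; first by rewrite mulr0.
by have := formM _ _ nzM; have := formN _ _ nzN; lia.
Qed.

Lemma thm38_form_tr_lower_left p M :
  (2 * p <= l)%N -> lower_left_block p M^T ->
  thm38_form p (l - 2 * p) p (l - 2 * p) M.
Proof.
move=> le2pl low i j nzM; have /andP[pj ip] : (p <= j)%N && (i < p)%N.
  by apply: low; rewrite mxE.
by have := ltn_ord j; lia.
Qed.

Definition rot_ord k (i : 'I_l) : 'I_l :=
  Ordinal (ltn_pmod (i + k) (leq_ltn_trans (leq0n i) (ltn_ord i))).

Lemma rot_ord_inj k : injective (rot_ord k).
Proof.
move=> i j /(congr1 val) /= /eqP.
by rewrite eqn_modDr !modn_small // => /eqP/val_inj.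
Qed.

Definition rot_perm k : 'S_l := perm (@rot_ord_inj k).

Lemma rot_perm_val r (i : 'I_l) : (r <= l)%N ->
  rot_perm (l - r) i = (if (r <= i)%N then i - r else i + (l - r))%N :> nat.
Proof.
move=> le_rl; rewrite permE /=; have := ltn_ord i.
case: ifP => le_ri lt_il.
  rewrite (_ : i + (l - r) = i - r + l)%N; last by lia.
  by rewrite modnDr modn_small //; lia.
by rewrite modn_small //; lia.
Qed.

(* Conjugating by the permutation matrix of [rot_perm (l - r)] moves entry
   (i, j) of [M] to position (i + r, j + r) modulo [l]. *)
Lemma thm38_form_rot_lower_left r M :
  (2 * r <= l)%N -> lower_left_block r M ->
  thm38_form r (l - 2 * r) 0 0
    (col_perm (rot_perm (l - r)) (row_perm (rot_perm (l - r)) M)).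
Proof.
move=> le2rl low i j; have le_rl : (r <= l)%N by lia.
rewrite !mxE => /low; rewrite !rot_perm_val //.
by have := ltn_ord i; have := ltn_ord j; case: ifP; case: ifP; lia.
Qed.

End BlockSupport.

Section RowEbase.

Variables (F : fieldType) (m l : nat) (U : 'M[F]_(m, l)).
Local Notation T := (row_ebase U).
Local Notation r := (\rank U).

Lemma row_ebase_row_sub (i : 'I_l) : (i < r)%N -> (row i T <= U)%MS.
Proof.
move=> lt_ir; rewrite -(eq_row_base U).
suff -> : row i T = row (Ordinal lt_ir) (row_base U) by apply: row_sub.
rewrite /row_base row_mul -{1}(mul1mx T) row_mul; congr (_ *m _).
by apply/rowP => k; rewrite !mxE lt_ir andbT.
Qed.

Lemma row_ebase_coord_eq0 (x : 'rV[F]_l) (j : 'I_l) :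
  (x <= U)%MS -> (r <= j)%N -> (x *m invmx T) 0 j = 0.
Proof.
case/submxP=> y -> le_rj.
rewrite -{1}(mulmx_ebase U) !mulmxA mulmxK ?row_ebase_unit //.
rewrite mxE big1 // => k _; rewrite [pid_mx _ _ _]mxE.
have /negbTE -> : ~~ ((k == j :> nat) && (k < r)%N) by lia.
by rewrite mulr0.
Qed.

Lemma row_ebase_conj_lower_left (M : 'M[F]_l) :
  (M <= U)%MS -> U *m M = 0 -> lower_left_block r (T *m M *m invmx T).
Proof.
move=> sub_MU UM0 i j.
have -> : (T *m M *m invmx T) i j = (row i T *m M *m invmx T) 0 j.
  by rewrite -!row_mul [RHS]mxE.
move=> nz.
apply/andP; split; [rewrite leqNgt | rewrite ltnNge]; apply: contra nz => h.
  have /submxP[y ->] := row_ebase_row_sub h.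
  by rewrite -(mulmxA y) UM0 mulmx0 mul0mx mxE.
by apply/eqP/row_ebase_coord_eq0 => //; apply: submx_trans (submxMl _ _) sub_MU.
Qed.

End RowEbase.

Lemma sumsmx_mul_eq0 (F : fieldType) (I : finType) l k (B : I -> 'M[F]_l)
    (M : 'M[F]_(l, k)) :
  (forall i, B i *m M = 0) -> (\sum_i B i)%MS *m M = 0.
Proof. by move=> BM0; apply/sub_kermxP/sumsmx_subP => i _; apply/sub_kermxP. Qed.

Lemma mxrank_add_le_tr_mul0 (F : fieldType) m k l (U : 'M[F]_(m, l))
    (V : 'M[F]_(k, l)) :
  V *m U^T = 0 -> (\rank V + \rank U <= l)%N.
Proof.
move/sub_kermxP/mxrankS; rewrite mxrank_ker mxrank_tr.
by have := rank_leq_col U; lia.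
Qed.

Section ImageRowspace.

Variables (F : fieldType) (n l : nat) (Phi : {linear 'M[F]_n -> 'M[F]_l}).

Definition image_rowspace := (\sum_(k : 'I_n * 'I_n) Phi (delta_mx k.1 k.2))%MS.

Lemma sub_image_rowspace A : (Phi A <= image_rowspace)%MS.
Proof.
rewrite (matrix_sum_delta A) pair_bigA linear_sum /=.
apply: summx_sub => -[i j] _; rewrite linearZ /=; apply: scalemx_sub.
exact: (sumsmx_sup (i, j)).
Qed.

Hypothesis Phi_mul0 : forall X Y, Phi X *m Phi Y = 0.

Lemma image_rowspace_mul0 A : image_rowspace *m Phi A = 0.
Proof. by apply: sumsmx_mul_eq0 => k; apply: Phi_mul0. Qed.

Lemma image_rowspace_conj_lower_left :
  exists2 T : 'M[F]_l, T \in unitmx &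
    forall A, lower_left_block (\rank image_rowspace) (T *m Phi A *m invmx T).
Proof.
exists (row_ebase image_rowspace); first exact: row_ebase_unit.
move=> A; apply: row_ebase_conj_lower_left.
  exact: sub_image_rowspace.
exact: image_rowspace_mul0.
Qed.

End ImageRowspace.

Section TransposedImage.

Variables (F : fieldType) (n l : nat) (Phi : {linear 'M[F]_n -> 'M[F]_l}).
Hypothesis Phi_mul0 : forall X Y, Phi X *m Phi Y = 0.

Lemma trmx_comp_mul0 X Y : (trmx \o Phi) X *m (trmx \o Phi) Y = 0.
Proof. by rewrite /= -trmx_mul Phi_mul0 trmx0. Qed.

Lemma rank_image_rowspace_tr_add_le :
  (\rank (image_rowspace (trmx \o Phi)) + \rank (image_rowspace Phi) <= l)%N.
Proof.
apply: mxrank_add_le_tr_mul0; apply: sumsmx_mul_eq0 => k.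
by rewrite /= -trmx_mul image_rowspace_mul0 ?trmx0.
Qed.

End TransposedImage.

Lemma conjmx_mul_eq0 (F : fieldType) l (S X Y : 'M[F]_l) : S \in unitmx ->
  (invmx S *m X *m S) *m (invmx S *m Y *m S) = 0 -> X *m Y = 0.
Proof.
move=> unitS; rewrite -!mulmxA mulKVmx // !mulmxA.
move/(congr1 (fun Z => S *m Z *m invmx S)).
by rewrite mulmx0 mul0mx !mulmxA mulmxV // mul1mx mulmxK.
Qed.

Section Conjugation.

Variables (F : fieldType) (X : Type) (l : nat) (f : X -> 'M[F]_l).

Lemma conj_thm38_form_tr p :
  (2 * p <= l)%N ->
  (exists2 T, T \in unitmx &
     forall A, lower_left_block p (T *m (f A)^T *m invmx T)) ->
  exists S0, S0 \in unitmx /\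
    forall A, thm38_form p (l - 2 * p) p (l - 2 * p) (invmx S0 *m f A *m S0).
Proof.
move=> le2pl [T unitT low]; exists T^T; split; first by rewrite unitmx_tr.
move=> A; apply: thm38_form_tr_lower_left => //.
by rewrite !trmx_mul trmx_inv !trmxK mulmxA.
Qed.

Lemma conj_thm38_form_rot r :
  (2 * r <= l)%N ->
  (exists2 T, T \in unitmx &
     forall A, lower_left_block r (T *m f A *m invmx T)) ->
  exists S0, S0 \in unitmx /\
    forall A, thm38_form r (l - 2 * r) 0 0 (invmx S0 *m f A *m S0).
Proof.
move=> le2rl [T unitT low]; pose s := rot_perm l (l - r).
pose P : 'M[F]_l := perm_mx s; have unitP : P \in unitmx by apply: unitmx_perm.
have unitPT : P *m T \in unitmx by rewrite unitmx_mul unitP.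
exists (invmx (P *m T)); split=> [|A]; first by rewrite unitmx_inv.
rewrite invmxK; have PTK : P *m T *m (invmx T *m perm_mx s^-1) = 1%:M.
  by rewrite mulmxA mulmxK // -perm_mxM mulgV perm_mx1.
have -> : invmx (P *m T) = invmx T *m perm_mx s^-1.
  by rewrite -[LHS]mulmx1 -PTK mulKmx.
move: (thm38_form_rot_lower_left le2rl (low A)).
by rewrite col_permE row_permE !mulmxA.
Qed.

End Conjugation.

Theorem theorem3p8 (F : fieldType) (n l : nat)
  (hF : exists s : seq F, uniq s /\ (l + 2 < 2 * size s)%N)
  (Phi : {linear 'M[F]_n -> 'M[F]_l}) :
  (forall X Y : 'M[F]_n, Phi X *m Phi Y = 0) <->
  (exists p q u v : nat,
     [/\ (2 * p + q = l)%N, (u <= p)%N & (v <= q)%N] /\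
     exists S0 : 'M[F]_l, S0 \in unitmx /\
       forall A : 'M[F]_n, thm38_form p q u v (invmx S0 *m Phi A *m S0)).
Proof.
split=> [Phi_mul0 | [p [q [u [v [[_ le_up _] [S0 [unitS0 form]]]]]]] X Y]; last first.
  exact: conjmx_mul_eq0 unitS0 (thm38_form_mul0 le_up (form X) (form Y)).
have rank_le := rank_image_rowspace_tr_add_le Phi_mul0.
set p := \rank (image_rowspace (trmx \o Phi)) in rank_le.
set r := \rank (image_rowspace Phi) in rank_le.
have [le2pl | lt_l2p] := leqP (2 * p) l.
  exists p, (l - 2 * p)%N, p, (l - 2 * p)%N; split; first by split => //; lia.
  apply: conj_thm38_form_tr => //.
  exact: image_rowspace_conj_lower_left (trmx_comp_mul0 Phi_mul0).
exists r, (l - 2 * r)%N, 0%N, 0%N; split; first by split => //; lia.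
apply: conj_thm38_form_rot; first by lia.
exact: image_rowspace_conj_lower_left.
Qed.
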